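(* Let $M := \langle X \mid R\rangle$ where $R$ is symmetric, and let $N$ be the additive submonoid of $\mathbb{Z}$ generated by $\{|a|-|b| : (a,b)\in R\}$. (1) If $a,b\in\langle X\rangle$ satisfy $a =_M b$, then $|a|-|b| \in N$. (2) Let $a,b \in\langle X\rangle$ be such that $a =_M b$, $|b|<|a|$, and there is no $c \in \mathsf{Z}_M(a)$ with $|b|<|c|<|a|$. Then there exist $e,f \in \langle X\rangle$ with $(e,f)\in R$ and $|a|-|b| \le |e|-|f|$. (3) For every $n \in N$ there exist $a,b\in\langle X\rangle$ with $a =_M b$ and $n = |a|-|b|$. (4) If $N \neq \{0\}$, then $N = d\mathbb{Z}$, where $d = \gcd(N) = \min(\Delta(M)) = \gcd(\Delta(M))$.
   Context: For a set $X$, $\langle X\rangle$ is the free monoid on $X$ (identity $1$); $M=\langle X\mid R\rangle$ is the monoid presented by generators $X$ and relations $R\subseteq\langle X\rangle\times\langle X\rangle$. $R$ is symmetric if $(a,b)\in R$ implies $(b,a)\in R$. For $a,b\in\langle X\rangle$, $a=_M b$ means equal images in $M$; $|a|$ is word length. $\mathsf{Z}_M(a) := \{b\in\langle X\rangle : b =_M a\}$, $\mathsf{L}_M(a) := \{|b| : b\in\mathsf{Z}_M(a)\}$, $\mathcal{L}(M) := \{\mathsf{L}_M(a): a\in\langle X\rangle\}$. For $L\subseteq\mathbb{N}$, $d\in\mathbb{N}^+$ is a distance of $L$ if $[k,k+d]\cap L=\{k,k+d\}$ for some $k\in L$; $\Delta(L)$ is the set of distances of $L$, and $\Delta(M) :=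 \bigcup_{L\in\mathcal{L}(M)}\Delta(L)$. *)

From mathcomp Require Import all_boot all_order all_algebra.
Set Implicit Arguments. Unset Strict Implicit. Unset Printing Implicit Defensive.
Import Order.TTheory GRing.Theory Num.Theory.

Section Pres.
Variable X : Type.
(* A presentation <X | R> with R a (possibly infinite) relation on the free monoid seq X. *)
Variable R : seq X -> seq X -> Prop.

Definition sym_rel : Prop := forall a b, R a b -> R b a.

Inductive pstep : seq X -> seq X -> Prop :=
  | pstep_intro u v a b : R a b -> pstep (u ++ a ++ v) (u ++ b ++ v).

(* a =_M b : the congruence generated by R (refl-sym-trans closure of pstep) *)
Inductive presEq : seq X -> seq X -> Prop :=
  | presEq_refl a : presEq a a
  | presEq_step a b : pstep a b -> presEq a b
  | presEq_sym a b : presEq a b -> presEq b a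
  | presEq_trans a b c : presEq a b -> presEq b c -> presEq a c.

Inductive inN : int -> Prop :=
  | inN0 : inN 0
  | inN_gen a b : R a b -> inN ((size a)%:Z - (size b)%:Z)%R
  | inN_add m n : inN m -> inN n -> inN (m + n)%R.

Definition factorizations (a : seq X) : seq X -> Prop := fun b => presEq b a.

Definition lengths (a : seq X) : nat -> Prop :=
  fun n => exists b, factorizations a b /\ size b = n.

End Pres.

Definition is_distance (L : nat -> Prop) (d : nat) : Prop :=
  (0 < d)%N /\ exists k, L k /\ L (k + d) /\ forall m, (k < m < k + d)%N -> ~ L m.

Definition DeltaM (X : Type) (R : seq X -> seq X -> Prop) (d : nat) : Prop :=
  exists a : seq X, is_distance (lengths R a) d.

(* A word-length difference between equal elements of M telescopes along a
   rewriting chain into differences |e| - |f| of relations, so it lies in N;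
   conversely concatenating relators realises every element of N.  If no
   factorization of a has length strictly between |b| and |a|, some single
   step of a chain from a to b must jump across that gap, which bounds
   |a| - |b| by one relation.  Finally N, being a submonoid of Z closed under
   negation, is the subgroup dZ for its least positive element d; every
   distance of a length set lies in N, and d itself is a distance because a
   factorization of length strictly between |b| and |b| + d would give a
   positive element of N below d. *)
From mathcomp Require Import all_boot all_order all_algebra.
From mathcomp Require Import zify.
From Stdlib Require Import ClassicalEpsilon.

Set Implicit Arguments.
Unset Strict Implicit.
Unset Printing Implicit Defensive.
Import Order.TTheory GRing.Theory Num.Theory.
Local Open Scope ring_scope.

Lemma ex_minP_classic (P : nat -> Prop) :
  (exists n, P n) -> exists m, P m /\ forall k, P k -> (m <= k)%N.
Proof.
move=> [n Pn].
pose p k : bool := excluded_middle_informative (P k).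
have Pp k : P k <-> p k by rewrite /p; case: excluded_middle_informative.
have exp : exists k, p k by exists n; apply/Pp.
case: (ex_minnP exp) => m /Pp Pm m_min.
by exists m; split=> // k /Pp /m_min.
Qed.

Section Presentation.
Variable X : Type.
Variable R : seq X -> seq X -> Prop.

Definition size_diff (a b : seq X) : int := (size a)%:Z - (size b)%:Z.

Lemma size_diff_cat a1 a2 b1 b2 :
  size_diff (a1 ++ a2) (b1 ++ b2) = size_diff a1 b1 + size_diff a2 b2.
Proof. rewrite /size_diff !size_cat; lia. Qed.

Lemma size_diff_ctx u v a b : size_diff (u ++ a ++ v) (u ++ b ++ v) = size_diff a b.
Proof. rewrite /size_diff !size_cat; lia. Qed.

Lemma presEq_ctx u v a b : presEq R a b -> presEq R (u ++ a ++ v) (u ++ b ++ v).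
Proof.
elim=> {a b} [a|_ _ [s t e f Ref]|a b _ IH|a b c _ IH1 _ IH2].
- exact: presEq_refl.
- by apply: presEq_step; have := pstep_intro (u ++ s) (t ++ v) Ref; rewrite -!catA.
- exact: presEq_sym.
- exact: presEq_trans IH1 IH2.
Qed.

Lemma presEq_cat a1 a2 b1 b2 :
  presEq R a1 b1 -> presEq R a2 b2 -> presEq R (a1 ++ a2) (b1 ++ b2).
Proof.
move=> eq1 eq2; apply: (@presEq_trans _ _ _ (b1 ++ a2)).
- by have := presEq_ctx [::] a2 eq1.
- by have := presEq_ctx b1 [::] eq2; rewrite !cats0.
Qed.

Lemma presEq_rel a b : R a b -> presEq R a b.
Proof. by move=> Rab; apply: presEq_step; have := pstep_intro [::] [::] Rab; rewrite /= !cats0. Qed.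

Lemma inN_size_diff_presEq n :
  inN R n -> exists a b, presEq R a b /\ n = size_diff a b.
Proof.
elim=> [|a b Rab|m k _ [a1 [b1 [eq1 ->]]] _ [a2 [b2 [eq2 ->]]]].
- by exists [::], [::]; split; [exact: presEq_refl|].
- by exists a, b; split; [exact: presEq_rel|].
- exists (a1 ++ a2), (b1 ++ b2); split; first exact: presEq_cat.
  by rewrite size_diff_cat.
Qed.

Hypothesis R_sym : sym_rel R.

Lemma inN_opp n : inN R n -> inN R (- n).
Proof.
elim=> [|a b Rab|m k _ INm _ INk].
- by rewrite oppr0; exact: inN0.
- by rewrite opprB; apply: inN_gen; exact: R_sym.
- by rewrite opprD; exact: inN_add.
Qed.

Lemma inN_mulz q n : inN R n -> inN R (q * n).
Proof.
move=> INn; have INmuln k : inN R (k%:Z * n).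
  elim: k => [|k IH]; first by rewrite mul0r; exact: inN0.
  by rewrite intS mulrDl mul1r; exact: inN_add.
by case: q => k; rewrite ?NegzE ?mulNr; [|apply: inN_opp].
Qed.

Lemma presEq_size_diff_inN a b : presEq R a b -> inN R (size_diff a b).
Proof.
elim=> {a b} [a|_ _ [u v e f Ref]|a b _ IH|a b c _ IH1 _ IH2].
- by rewrite /size_diff subrr; exact: inN0.
- by rewrite size_diff_ctx; exact: inN_gen.
- by have := inN_opp IH; rewrite /size_diff opprB.
- by have := inN_add IH1 IH2; rewrite /size_diff addrA subrK.
Qed.

Section LengthGap.
Variables (a : seq X) (lo hi : nat).
Hypothesis lo_lt_hi : (lo < hi)%N.
Hypothesis gap : forall c, presEq R c a -> (size c <= lo)%N \/ (hi <= size c)%N.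

Definition crosses_gap (x y : seq X) : Prop :=
  (hi <= size x /\ size y <= lo)%N \/ (size x <= lo /\ hi <= size y)%N.

(* Every word of the chain lies in the class of a, hence on one side of the
   gap, so a crossing chain contains a crossing single step. *)
Lemma crossing_step x y : presEq R x y -> presEq R x a -> crosses_gap x y ->
  exists e f, R e f /\ hi%:Z - lo%:Z <= size_diff e f.
Proof.
elim=> {x y} [x|_ _ [u v e f Ref]|x y xy IH|x y z xy IH1 yz IH2] xa.
- by rewrite /crosses_gap; lia.
- rewrite /crosses_gap !size_cat => -[] cross.
  + by exists e, f; split=> //; rewrite /size_diff; lia.
  + by exists f, e; split; [exact: R_sym|rewrite /size_diff; lia].
- move=> cross; apply: IH; first exact: presEq_trans xy xa.
  by move: cross; rewrite /crosses_gap; tauto.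
- have ya : presEq R y a by exact: presEq_trans (presEq_sym xy) xa.
  move=> cross; have [y_lo|y_hi] := gap ya.
  + case: cross => -[x_side z_side]; first by apply: IH1 => //; left.
    by apply: IH2 => //; right.
  + case: cross => -[x_side z_side]; first by apply: IH2 => //; left.
    by apply: IH1 => //; right.
Qed.

End LengthGap.

Lemma length_gap_bound a b : presEq R a b -> (size b < size a)%N ->
  ~ (exists c, factorizations R a c /\ (size b < size c < size a)%N) ->
  exists e f, R e f /\ size_diff a b <= size_diff e f.
Proof.
move=> ab b_lt_a no_mid.
have gap c : presEq R c a -> (size c <= size b)%N \/ (size a <= size c)%N.
  move=> ca; have [|c_lt_a] := leqP (size a) (size c); first by right.
  left; rewrite leqNgt; apply/negP => b_lt_c.
  by apply: no_mid; exists c; rewrite b_lt_c c_lt_a.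
apply: (crossing_step b_lt_a gap ab (presEq_refl _ _)).
by left.
Qed.

Lemma inN_least_pos : (exists z, inN R z /\ z <> 0) ->
  exists d : nat, [/\ (0 < d)%N, inN R d%:Z &
                      forall k : nat, (0 < k)%N -> inN R k%:Z -> (d <= k)%N].
Proof.
case=> z [INz z_neq0].
have [n [n_gt0 INn]] : exists n : nat, (0 < n)%N /\ inN R n%:Z.
  case: z INz z_neq0 => k INk k_neq0; first by exists k; split=> //; lia.
  by exists k.+1; split=> //; have := inN_opp INk; rewrite NegzE opprK.
have [|d [[d_gt0 INd] d_min]] := @ex_minP_classic (fun k => 0 < k /\ inN R k%:Z)%N.
  by exists n.
by exists d; split=> // k k_gt0 INk; apply: d_min.
Qed.

Section LeastPositive.
Variable d : nat.
Hypothesis d_gt0 : (0 < d)%N.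
Hypothesis inN_d : inN R d%:Z.
Hypothesis d_min : forall k : nat, (0 < k)%N -> inN R k%:Z -> (d <= k)%N.

(* The remainder z mod d is again in N and lies in [0, d), so it vanishes. *)
Lemma inN_dvdzP z : inN R z <-> (d%:Z %| z)%Z.
Proof.
split=> [INz|/dvdzP [q ->]]; last exact: inN_mulz.
have INr : inN R (z %% d)%Z.
  rewrite /modz; apply: inN_add => //.
  by rewrite -mulNr; exact: inN_mulz.
have r_lt_d : (z %% d)%Z < d%:Z by apply: ltz_pmod; lia.
have [k r_eq] : exists k : nat, (z %% d)%Z = k%:Z.
  by exists `|(z %% d)%Z|%N; rewrite gez0_abs // modz_ge0 // lt0n_neq0.
apply/dvdz_mod0P; rewrite r_eq in INr r_lt_d *.
case: k {r_eq} INr r_lt_d => [//|k] INk k_lt_d.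
by have := d_min (ltn0Sn k) INk; lia.
Qed.

Lemma DeltaM_dvdn d' : DeltaM R d' -> (d %| d')%N.
Proof.
case=> a [_ [k [[c1 [c1a <-]] [[c2 [c2a size_c2]] _]]]].
have := presEq_size_diff_inN (presEq_trans c2a (presEq_sym c1a)).
by rewrite inN_dvdzP dvdzE /size_diff size_c2 (distnEl (leq_addr _ _)) addKn.
Qed.

Lemma DeltaM_least_pos : DeltaM R d.
Proof.
have [a [b [ab d_eq]]] := inN_size_diff_presEq inN_d.
have size_a : size a = (size b + d)%N by move: d_eq; rewrite /size_diff; lia.
exists a; split=> //; exists (size b); split; first by exists b; split=> //; exact: presEq_sym.
split; first by exists a; split; [exact: presEq_refl|].
move=> m /andP [b_lt_m m_lt] [c [ca size_c]].
have := presEq_size_diff_inN (presEq_trans ca ab).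
rewrite inN_dvdzP dvdzE /size_diff size_c (distnEl (ltnW b_lt_m)) => /dvdn_leq.
by rewrite subn_gt0 => /(_ b_lt_m); lia.
Qed.

End LeastPositive.

End Presentation.

Theorem lemma4p2 (X : Type) (R : seq X -> seq X -> Prop) (HR : sym_rel R) :
  (* (1) *)
  (forall a b : seq X, presEq R a b ->
     inN R ((size a)%:Z - (size b)%:Z)) /\
  (* (2) *)
  (forall a b : seq X, presEq R a b -> (size b < size a)%N ->
     ~ (exists c, factorizations R a c /\ (size b < size c < size a)%N) ->
     exists e f : seq X, R e f /\
       (size a)%:Z - (size b)%:Z <= (size e)%:Z - (size f)%:Z) /\
  (* (3) *)
  (forall n : int, inN R n ->
     exists a b : seq X, presEq R a b /\ n = (size a)%:Z - (size b)%:Z) /\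
  (* (4) *)
  ((exists z : int, inN R z /\ z <> 0) ->
   exists d : nat,
     (* N = dZ *)
     (forall z : int, inN R z <-> (d%:Z %| z)%Z) /\
     (* d = gcd(N): d >= 0 divides every element of N, and every common divisor of N divides d *)
     ((forall z, inN R z -> (d%:Z %| z)%Z) /\
      (forall e : int, (forall z, inN R z -> (e %| z)%Z) -> (e %| d%:Z)%Z)) /\
     (* d = min Delta(M) *)
     (DeltaM R d /\ forall d', DeltaM R d' -> (d <= d')%N) /\
     (* d = gcd Delta(M) *)
     ((forall d', DeltaM R d' -> (d %| d')%N) /\
      (forall e : nat, (forall d', DeltaM R d' -> (e %| d')%N) -> (e %| d)%N))).
Proof.
split; first exact: presEq_size_diff_inN.
split; first exact: length_gap_bound.
split; first exact: inN_size_diff_presEq.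
move=> /(inN_least_pos HR) [d [d_gt0 INd d_min]].
have N_eq := inN_dvdzP HR d_gt0 INd d_min.
have Delta_dvd := DeltaM_dvdn HR d_gt0 INd d_min.
have Delta_d := DeltaM_least_pos HR d_gt0 INd d_min.
exists d; split=> //; split; first by split=> [z /N_eq //|e]; apply.
split; split=> //; last by move=> e; apply.
by move=> d' Dd'; apply: dvdn_leq _ (Delta_dvd _ Dd'); case: Dd' => ? [].
Qed.
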